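(* The sets $$(\mathrm s^{(n,k)},T,\varepsilon)=\{S\in\mathcal M_{\mathcal G,\Gamma}:\mathrm s^{(n,k)}(T,S)<\varepsilon\},\qquad n,k\in\mathbb N,\ \varepsilon>0,\ T\in\mathcal M_{\mathcal G,\Gamma},$$ form a base of the topology on $\mathcal M_{\mathcal G,\Gamma}$ induced by the metric $\mathrm m_{\mathcal G,\Gamma}$, where $\mathrm s^{(n,k)}(T,S)=\sup_{g\in\Gamma\cup(\bigcup_{i\le n}K_i)}\mathrm a_k(T^g,S^g)$.
   Context: $(X,\Sigma,\mu)$ is a separable Lebesgue space with a non-atomic probability measure $\mu$. $\mathcal A$ is the group of invertible measure-preserving transformations of $X$, two transformations being identified if they agree outside a null set. Fix a countable family $\{A_i\}_{i\in\mathbb N}\subset\Sigma$ that generates $\Sigma$ and is dense in $\Sigma$ (for every $A\in\Sigma$ and $\varepsilon>0$ there is $i$ with $\mu(A_i\triangle A)<\varepsilon$). For $T,S\in\mathcal A$ put $\mathrm d(T,S)=\sum_{i}2^{-i}\big(\mu(TA_i\triangle SA_i)+\mu(T^{-1}A_i\triangle S^{-1}A_i)\big)$, $\mathrm a(T,S)=\sum_{i,j}2^{-(i+j)}|\mu(TA_i\cap A_j)-\mu(SA_i\cap A_j)|$, and $\mathrm a_k(T,S)=\sum_{i,j\le k}2^{-(i+j)}|\mu(TA_i\cap A_j)-\mu(SA_i\cap A_j)|$. $\mathcal G$ is a Hausdorff locally compact group with a countable neighborhood base. Fix an at most countable family $\{K_i\}$ of compact subsets of $\mathcal G$ with nonempty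 interiors whose union contains a set generating $\mathcal G$ (if the family has fewer than $n$ members, $\bigcup_{i\le n}K_i$ means the union of all of them). An action of $\mathcal G$ is a family $T=\{T^g\}_{g\in\mathcal G}\subset\mathcal A$ with $T^gT^h=T^{gh}$ for all $g,h$ and such that $g\mapsto\mu(T^gA\cap B)$ is continuous for all $A,B\in\Sigma$. $\mathrm d_{\mathcal G}(T,S)=\sum_i 2^{-i}\sup_{g\in K_i}\mathrm d(T^g,S^g)$. Let $\Gamma\subset\mathcal G$ be an unbounded subset (not contained in any compact set). An action $T$ is $\Gamma$-mixing if for all $A,B\in\Sigma$ and $\varepsilon>0$ there is a compact $C\subset\mathcal G$ with $|\mu(T^gA\cap B)-\mu(A)\mu(B)|<\varepsilon$ for all $g\in\Gamma\setminus C$. $\mathcal M_{\mathcal G,\Gamma}$ is the set of all $\Gamma$-mixing actions with the leash metric $\mathrm m_{\mathcal G,\Gamma}(T,S)=\mathrm d_{\mathcal G}(T,S)+\sup_{g\in\Gamma}\mathrm a(T^g,S^g)$. *)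

From mathcomp Require Import all_boot all_order all_algebra.
From mathcomp Require Import all_classical all_reals all_analysis.
Set Implicit Arguments. Unset Strict Implicit. Unset Printing Implicit Defensive.
Import Order.TTheory GRing.Theory Num.Theory.
Import numFieldTopology.Exports numFieldNormedType.Exports.
Local Open Scope classical_set_scope.
Local Open Scope ring_scope.

(* Representatives of elements of the group 𝒜 of invertible measure-preserving
   transformations: a forward map and its (a.e.) inverse. *)
Record tr (X : Type) := Tr { tfwd : X -> X ; tbwd : X -> X }.

Definition symdiff {T : Type} (A B : set T) : set T := (A `\` B) `|` (B `\` A).

Section MeasureSide.
Variables (R : realType) (d : measure_display) (X : measurableType d)
  (mu : probability X R).

Definition I01 : set R := [set t : R | 0 <= t <= 1].

(* (X, Σ, μ) is a separable non-atomic Lebesgue probability space: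
   it is isomorphic mod 0 to ([0,1], Lebesgue measure). *)
Definition nonatomic_lebesgue_space : Prop :=
  exists (phiL : X -> R) (psiL : R -> X),
    [/\ measurable_fun setT phiL, measurable_fun I01 psiL,
        ({ae mu, forall x, I01 (phiL x)}),
        ({ae mu, forall x, (psiL (phiL x) = x)}) &
        ({ae (@lebesgue_measure R), forall t, I01 t -> (phiL (psiL t) = t)})]
    /\ (forall B : set R, measurable B ->
          mu (phiL @^-1` B) = lebesgue_measure (B `&` I01)).

Definition is_mpt (T : tr X) : Prop :=
  [/\ measurable_fun setT (tfwd T), measurable_fun setT (tbwd T),
      (forall B, measurable B -> mu (tfwd T @^-1` B) = mu B) &
      (forall B, measurable B -> mu (tbwd T @^-1` B) = mu B)]
  /\ ({ae mu, forall x, (tfwd T (tbwd T x) = x)})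
  /\ ({ae mu, forall x, (tbwd T (tfwd T x) = x)}).

(* image T A (= preimage under T^{-1}) and preimage T^{-1} A *)
Definition timg (T : tr X) (B : set X) : set X := tbwd T @^-1` B.
Definition tpre (T : tr X) (B : set X) : set X := tfwd T @^-1` B.

(* the fixed family {A_i}; ℕ = {1,2,...} is encoded by 0-based indices,
   A_{i+1} := Af i, with weight 2^{-(i+1)} *)
Variable Af : nat -> set X.

Definition wt (i : nat) : R := 2%:R ^- i.+1.

Definition dA (T S : tr X) : \bar R :=
  (\sum_(i <oo) ((wt i)%:E *
     (mu (symdiff (timg T (Af i)) (timg S (Af i)))
      + mu (symdiff (tpre T (Af i)) (tpre S (Af i))))))%E.

Definition aA (T S : tr X) : \bar R :=
  (\sum_(i <oo) \sum_(j <oo) ((wt i * wt j)%:E *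
     `| mu (timg T (Af i) `&` Af j) - mu (timg S (Af i) `&` Af j) |))%E.

(* a_k : indices i, j <= k in ℕ = {1,2,...}, i.e. 0-based i, j < k *)
Definition aAk (k : nat) (T S : tr X) : \bar R :=
  (\sum_(0 <= i < k) \sum_(0 <= j < k) ((wt i * wt j)%:E *
     `| mu (timg T (Af i) `&` Af j) - mu (timg S (Af i) `&` Af j) |))%E.

End MeasureSide.

Section GroupSide.
Variables (G : topologicalType) (mulG : G -> G -> G) (invG : G -> G) (oneG : G).

Definition is_topological_group : Prop :=
  [/\ (forall x y z, mulG x (mulG y z) = mulG (mulG x y) z),
      (forall x, mulG oneG x = x), (forall x, mulG x oneG = x),
      (forall x, mulG (invG x) x = oneG) & (forall x, mulG x (invG x) = oneG)]
  /\ continuous (fun p : G * G => mulG p.1 p.2)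
  /\ continuous invG.

Definition first_countable : Prop :=
  forall x : G, exists B : nat -> set G,
    (forall n, nbhs x (B n)) /\
    (forall U, nbhs x U -> exists n, B n `<=` U).

Definition generates (S : set G) : Prop :=
  forall H : set G, H oneG -> (forall x y, H x -> H y -> H (mulG x y)) ->
    (forall x, H x -> H (invG x)) -> S `<=` H -> H = setT.

Definition unbounded (Gam : set G) : Prop :=
  forall C : set G, compact C -> ~ (Gam `<=` C).

End GroupSide.

(* index set of an at most countable family {K_i}: None = infinitely many
   members (indices 0,1,2,...), Some N = exactly N members (0-based indices
   0..N-1); member K_{i+1} of the paper is K i here. *)
Definition Kin (Kn : option nat) (i : nat) : bool :=
  if Kn is Some N then (i < N)%N else true.

Section Actions.
Variables (R : realType) (d : measure_display) (X : measurableType d)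
  (mu : probability X R) (Af : nat -> set X)
  (G : topologicalType) (mulG : G -> G -> G)
  (Gam : set G) (K : nat -> set G) (Kn : option nat).

Definition is_action (T : G -> tr X) : Prop :=
  [/\ (forall g, is_mpt mu (T g)),
      (forall g h, ({ae mu, forall x, (tfwd (T g) (tfwd (T h) x) = tfwd (T (mulG g h)) x)}))
    & (forall A B : set X, measurable A -> measurable B ->
         continuous (fun g : G => fine (mu (timg (T g) A `&` B)) : R))].

Definition gamma_mixing (T : G -> tr X) : Prop :=
  forall A B : set X, measurable A -> measurable B ->
  forall eps : R, 0 < eps ->
  exists C : set G, compact C /\
    forall g, Gam g -> ~ C g ->
      `| fine (mu (timg (T g) A `&` B)) - fine (mu A) * fine (mu B) | < eps.

Definition MGG : set (G -> tr X) := [set T | is_action T /\ gamma_mixing T].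

Definition dG (T S : G -> tr X) : \bar R :=
  (\sum_(i <oo | Kin Kn i) ((wt R i)%:E *
      ereal_sup [set dA mu Af (T g) (S g) | g in K i]))%E.

Definition mGG (T S : G -> tr X) : \bar R :=
  (dG T S + ereal_sup [set aA mu Af (T g) (S g) | g in Gam])%E.

(* Γ ∪ ⋃_{i <= n} K_i  (paper indices 1..n = 0-based indices < n) *)
Definition GamKn (n : nat) : set G :=
  Gam `|` [set g | exists i, [/\ Kin Kn i, (i < n)%N & K i g]].

Definition sNK (n k : nat) (T S : G -> tr X) : \bar R :=
  ereal_sup [set aAk mu Af k (T g) (S g) | g in GamKn n].

Definition sball (n k : nat) (eps : R) (T : G -> tr X) : set (G -> tr X) :=
  [set S | MGG S /\ (sNK n k T S < eps%:E)%E].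

Definition m_open (U : set (G -> tr X)) : Prop :=
  U `<=` MGG /\
  forall S, U S -> exists2 r : R, 0 < r &
    forall S', MGG S' -> (mGG S S' < r%:E)%E -> U S'.

End Actions.

From mathcomp Require Import all_boot all_order all_algebra.
From mathcomp Require Import all_classical all_reals all_analysis.
From mathcomp Require Import ring lra.
Import Order.TTheory GRing.Theory Num.Theory.
Import numFieldTopology.Exports numFieldNormedType.Exports.
Set Implicit Arguments. Unset Strict Implicit.
Local Open Scope classical_set_scope.
Local Open Scope ring_scope.

(** For [g] in [Γ ∪ K_1 ∪ ... ∪ K_n] the truncated distance [a_k(T^g, S^g)] is
   at most [2^n m(T, S)]: on [Γ] it is dominated by [sup_Γ a], and on [K_i] by
   [sup_(K_i) d], which enters [d_G] with weight [2^-i >= 2^-n].  With the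
   triangle inequality for [a_k] this makes every set [(s^(n,k), T, ε)] open.

   Conversely, fix [S] and [r > 0], and [N] with [2^-N] small.  The maps
   [g ↦ μ(S^g A ∩ B)] are continuous and the [K_i] compact, so finitely many
   [A_j], [j < k], approximate every [S^g A_m] and [(S^g)^-1 A_m], [m < N],
   uniformly in [g ∈ K_i], [i < N].  If [a_k(S^g, S'^g)] is small, the
   correlations of [S'^g A_m] and [S^g A_m] with the approximating [A_j] nearly
   agree; since [S^g A_m] and [S'^g A_m] have the same measure, they are then
   close in measure.  Hence [d(S^g, S'^g)] is small on the [K_i] up to a tail
   [2^-N], and [a(S^g, S'^g) <= a_k(S^g, S'^g) + 2^(1-k)] on [Γ]. *)

Section ProbabilityFacts.
Variables (R : realType) (d : measure_display) (X : measurableType d)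
  (mu : probability X R).

Definition prob (A : set X) : R := fine (mu A).

Lemma probE A : measurable A -> mu A = (prob A)%:E.
Proof.
move=> mA; rewrite /prob fineK // ge0_fin_numE ?measure_ge0 //.
by rewrite (le_lt_trans (probability_le1 _ mA)) // ltry.
Qed.

Lemma prob_ge0 A : 0 <= prob A.
Proof. by rewrite /prob fine_ge0 // measure_ge0. Qed.

Lemma prob_le1 A : measurable A -> prob A <= 1.
Proof. by move=> mA; rewrite -lee_fin -probE // probability_le1. Qed.

Lemma le_prob A B : measurable A -> measurable B -> A `<=` B -> prob A <= prob B.
Proof. by move=> mA mB AB; rewrite -lee_fin -!probE // le_measure ?inE. Qed.

Lemma probU2 A B : measurable A -> measurable B -> prob (A `|` B) <= prob A + prob B.
Proof.
move=> mA mB; have mAB := measurableU _ _ mA mB.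
by rewrite -lee_fin EFinD -!probE //; apply: measureU2.
Qed.

Lemma probDI A B : measurable A -> measurable B ->
  prob A = prob (A `\` B) + prob (A `&` B).
Proof.
move=> mA mB; have mAB := measurableI _ _ mA mB; have mAB' := measurableD mA mB.
by apply/EFin_inj; rewrite EFinD -!probE //; exact: (measureDI mu mA mB).
Qed.

Lemma probU A B : measurable A -> measurable B -> A `&` B = set0 ->
  prob (A `|` B) = prob A + prob B.
Proof.
move=> mA mB AB; have mAB := measurableU _ _ mA mB.
by apply/EFin_inj; rewrite EFinD -!probE //; exact: measureU.
Qed.

Lemma prob_symdiff U V : measurable U -> measurable V ->
  prob (symdiff U V) = prob U + prob V - 2 * prob (U `&` V).
Proof.
move=> mU mV; have disj : (U `\` V) `&` (V `\` U) = set0.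
  by apply/seteqP; split => [x [[? ?] [? ?]]|x []].
rewrite /symdiff probU ?disj //; try exact: measurableD.
by rewrite (probDI mU mV) (probDI mV mU) setIC; lra.
Qed.

Lemma symdiffC (A B : set X) : symdiff A B = symdiff B A.
Proof. by rewrite /symdiff setUC. Qed.

Lemma dist_probI_le_symdiff U V B : measurable U -> measurable V -> measurable B ->
  `| prob (U `&` B) - prob (V `&` B) | <= prob (symdiff U V).
Proof.
have half U0 V0 : measurable U0 -> measurable V0 -> measurable B ->
    prob (U0 `&` B) <= prob (V0 `&` B) + prob (symdiff U0 V0).
  move=> mU0 mV0 mB; have mS : measurable (symdiff U0 V0) by apply: measurableU; apply: measurableD.
  apply: le_trans (probU2 (measurableI _ _ mV0 mB) mS).
  apply: le_prob (measurableI _ _ mU0 mB) (measurableU _ _ (measurableI _ _ mV0 mB) mS) _.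
  by move=> x [U0x Bx]; have [V0x|nV0x] := pselect (V0 x); [left|right; left].
move=> mU mV mB; rewrite ler_norml.
have := half _ _ mU mV mB; have := half _ _ mV mU mB; rewrite symdiffC.
by move=> h1 h2; apply/andP; split; lra.
Qed.

Lemma prob_symdiff_le_approx U U' A (del : R) :
  measurable U -> measurable U' -> measurable A -> prob U' = prob U ->
  prob (symdiff U A) < del ->
  prob (symdiff U U') <= 4 * del + 2 * `| prob (U `&` A) - prob (U' `&` A) |.
Proof.
move=> mU mU' mA eqU hA.
have h1 := dist_probI_le_symdiff mU mA mU'.
have h2 := dist_probI_le_symdiff mU mA mU.
rewrite setIid in h2; rewrite prob_symdiff // eqU.
have := ler_norm (prob (U `&` A) - prob (U' `&` A)).
move: h1 h2; rewrite !ler_norml [A `&` U]setIC [A `&` U']setIC [U' `&` A]setIC.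
by move=> /andP[? ?] /andP[? ?]; lra.
Qed.

Lemma measure_eq_outside_null (N Y Z : set X) : measurable N -> mu N = 0%E ->
  measurable Y -> measurable Z -> Y `\` N = Z `\` N -> mu Y = mu Z.
Proof.
move=> mN N0 mY mZ e.
rewrite (measureDI mu mY mN) (measureDI mu mZ mN) e.
rewrite (subset_measure0 (measurableI _ _ mY mN) mN (@subIsetr _ _ _) N0).
by rewrite (subset_measure0 (measurableI _ _ mZ mN) mN (@subIsetr _ _ _) N0).
Qed.

End ProbabilityFacts.

Section MeasurePreserving.
Variables (R : realType) (d : measure_display) (X : measurableType d)
  (mu : probability X R) (P : tr X).
Hypothesis hP : is_mpt mu P.

Lemma measurable_timg B : measurable B -> measurable (timg P B).
Proof. by case: hP => -[_ mb _ _] _ mB; rewrite /timg -[_ @^-1` _]setTI; exact: mb. Qed.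

Lemma measurable_tpre B : measurable B -> measurable (tpre P B).
Proof. by case: hP => -[mf _ _ _] _ mB; rewrite /tpre -[_ @^-1` _]setTI; exact: mf. Qed.

Lemma prob_timg B : measurable B -> prob mu (timg P B) = prob mu B.
Proof. by case: hP => -[_ _ _ hb] _ mB; rewrite /prob /timg hb. Qed.

Lemma prob_tpre B : measurable B -> prob mu (tpre P B) = prob mu B.
Proof. by case: hP => -[_ _ hf _] _ mB; rewrite /prob /tpre hf. Qed.

(* [P^-1 A ∩ B] is the preimage of [A ∩ P B] under the backward map, up to
   the null set where the two maps fail to be mutually inverse. *)
Lemma prob_tpreI A B : measurable A -> measurable B ->
  prob mu (tpre P A `&` B) = prob mu (timg P B `&` A).
Proof.
move=> mA mB; have [[_ mb _ hb] [[N [mN N0 sN]] _]] := hP.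
have inv x : ~ N x -> tfwd P (tbwd P x) = x.
  by move=> nN; apply: contra_notP nN => h; exact: sN.
rewrite /prob -hb; last exact: measurableI (measurable_tpre mA) mB.
congr fine; apply: (measure_eq_outside_null mN N0).
- by rewrite -[_ @^-1` _]setTI; apply: mb => //; exact: measurableI (measurable_tpre mA) mB.
- exact: measurableI (measurable_timg mB) mA.
by apply/seteqP; split => x [[/= h1 h2] /[dup] nN /inv ex]; do !split => //;
  rewrite /tpre /= ex in h1 *.
Qed.

End MeasurePreserving.

Ltac measurable_set :=
  rewrite ?/symdiff;
  first [ done | eassumption
        | apply: measurableU; measurable_set | apply: measurableD; measurable_set
        | apply: measurableI; measurable_set
        | apply: measurable_timg; measurable_set | apply: measurable_tpre; measurable_set ].

Section Weights.
Variable R : realType.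

Lemma wt_gt0 i : 0 < wt R i.
Proof. by rewrite /wt invr_gt0 exprn_gt0. Qed.

Lemma wt_ge0 i : 0 <= wt R i.
Proof. exact/ltW/wt_gt0. Qed.

Lemma sum_wt_le1 M : \sum_(0 <= i < M) wt R i <= 1.
Proof.
have -> : \sum_(0 <= i < M) wt R i = 1 - 2%:R ^- M.
  elim: M => [|M IH]; first by rewrite big_geq // expr0 invr1 subrr.
  rewrite big_nat_recr //= IH /wt exprS invfM.
  by have := splitr (2%:R ^- M : R); lra.
by rewrite lerBlDr lerDl invr_ge0 exprn_ge0.
Qed.

Lemma wt_inv_le i n : (i < n)%N -> (wt R i)^-1 <= 2%:R ^+ n.
Proof. by move=> lt; rewrite /wt invrK ler_eXn2l // ltr1n. Qed.

Lemma expr2V_ge0 n : 0 <= (2%:R ^- n : R).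
Proof. by rewrite invr_ge0 exprn_ge0. Qed.

Lemma expr2V_le (N k : nat) : (N <= k)%N -> (2%:R ^- k : R) <= 2%:R ^- N.
Proof.
move=> Nk; rewrite -!exprVn; apply: ler_wiXn2l Nk; first by rewrite invr_ge0 ler0n.
by rewrite invf_le1 // ler1n.
Qed.

Lemma exists_expr2V_lt (r : R) : 0 < r -> exists N, (0 < N)%N /\ 2%:R ^- N < r.
Proof.
move=> r0; pose N := (Num.bound r^-1).+1; exists N; split => //.
rewrite -[r]invrK ltf_pV2 ?posrE ?invr_gt0 ?exprn_gt0 //.
apply: lt_trans (archi_boundP _) _; first by rewrite invr_ge0 ltW.
by rewrite -natrX ltr_nat (ltn_trans (ltnSn _)) // ltn_expl.
Qed.

Local Open Scope ereal_scope.

Lemma nneseries_wt_le (c : R) : (0 <= c)%R -> \sum_(i <oo) ((wt R i * c)%:E) <= c%:E.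
Proof.
move=> c0; apply: le_trans (@epsilon_trick0 R c xpredT c0).
by rewrite le_eqVlt; apply/orP; left; apply/eqP/eq_eseriesr => i _;
  rewrite /wt natrX mulrC.
Qed.

Lemma nneseries_le_partial_tail (f : nat -> \bar R) (M : nat) (c : R) :
  (forall i, 0 <= f i) -> (forall i, (M <= i)%N -> f i <= (wt R i * c)%:E) -> (0 <= c)%R ->
  \sum_(i <oo) f i <= \sum_(0 <= i < M) f i + (c * 2%:R ^- M)%:E.
Proof.
move=> f0 fc c0; rewrite (nneseries_split 0 M) //; apply: leeD2l.
rewrite add0n -nneseries_addn //.
apply: le_trans _ (nneseries_wt_le (mulr_ge0 c0 (expr2V_ge0 M))).
apply: lee_nneseries => // i _; apply: le_trans (fc _ (leq_addl _ _)) _.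
rewrite lee_fin /wt -addSn exprD invfM le_eqVlt; apply/orP; left; apply/eqP; ring.
Qed.

Lemma nneseries_cond_ge_term (f : nat -> \bar R) (P : pred nat) i :
  (forall i, P i -> 0 <= f i) -> P i -> f i <= \sum_(j <oo | P j) f j.
Proof.
move=> f0 Pi; rewrite (nneseriesD1 f0 Pi) leeDl //.
by apply: nneseries_ge0 => n _ /andP[/f0].
Qed.

End Weights.

Section Distances.
Variables (R : realType) (d : measure_display) (X : measurableType d)
  (mu : probability X R) (Af : nat -> set X).
Hypothesis mAf : forall i, measurable (Af i).
Local Hint Resolve mAf : core.

Definition coef_dist (P Q : tr X) i j : R :=
  `| prob mu (timg P (Af i) `&` Af j) - prob mu (timg Q (Af i) `&` Af j) |.

Definition akR k (P Q : tr X) : R :=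
  \sum_(0 <= i < k) \sum_(0 <= j < k) (wt R i * wt R j * coef_dist P Q i j).

Definition dist_timg (P Q : tr X) i : R :=
  prob mu (symdiff (timg P (Af i)) (timg Q (Af i))).

Definition dist_tpre (P Q : tr X) i : R :=
  prob mu (symdiff (tpre P (Af i)) (tpre Q (Af i))).

Definition approx_by k (del : R) (B : set X) :=
  exists2 j, (j < k)%N & prob mu (symdiff B (Af j)) < del.

Lemma approx_by_le k k' del B : (k <= k')%N -> approx_by k del B -> approx_by k' del B.
Proof. by move=> kk' [j jk hj]; exists j => //; exact: leq_trans kk'. Qed.

Lemma akR_ge0 k P Q : 0 <= akR k P Q.
Proof.
apply: sumr_ge0 => i _; apply: sumr_ge0 => j _.
by rewrite !mulr_ge0 ?wt_ge0 ?normr_ge0.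
Qed.

Lemma akR_refl k P : akR k P P = 0.
Proof.
by rewrite /akR big1 // => i _; rewrite big1 // => j _; rewrite /coef_dist subrr normr0 mulr0.
Qed.

Lemma akR_triangle k P Q Q' : akR k P Q' <= akR k P Q + akR k Q Q'.
Proof.
rewrite /akR -big_split /=; apply: ler_sum => i _; rewrite -big_split /=.
apply: ler_sum => j _; rewrite -mulrDr; apply: ler_wpM2l; first by rewrite mulr_ge0 ?wt_ge0.
rewrite /coef_dist; set a := prob _ _; set b := prob _ _; set c := prob _ _.
by rewrite (_ : a - b = (a - c) + (c - b)) ?ler_normD //; ring.
Qed.

(* Each coefficient carries weight at least [4^-k] in [a_k]. *)
Lemma coef_dist_le_akR k P Q i j : (i < k)%N -> (j < k)%N ->
  coef_dist P Q i j <= 2%:R ^+ k * 2%:R ^+ k * akR k P Q.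
Proof.
move=> ik jk; have wi := wt_gt0 R i; have wj := wt_gt0 R j.
have term : wt R i * wt R j * coef_dist P Q i j <= akR k P Q.
  have t0 i' j' : 0 <= wt R i' * wt R j' * coef_dist P Q i' j'.
    by rewrite !mulr_ge0 ?wt_ge0 ?normr_ge0.
  rewrite /akR (bigD1_seq i) ?mem_index_iota ?iota_uniq //= -[X in X <= _]addr0.
  apply: lerD; last by apply: sumr_ge0 => *; apply: sumr_ge0.
  rewrite (bigD1_seq j) ?mem_index_iota ?iota_uniq //= -[X in X <= _]addr0.
  by apply: lerD => //; apply: sumr_ge0.
rewrite (_ : coef_dist P Q i j =
  (wt R i)^-1 * (wt R j)^-1 * (wt R i * wt R j * coef_dist P Q i j)); last first.
  by field; rewrite !gt_eqF.
have wi0 := ltW wi; have wj0 := ltW wj.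
apply: ler_pM; rewrite ?mulr_ge0 ?invr_ge0 ?normr_ge0 //.
by apply: ler_pM; rewrite ?invr_ge0 ?wt_inv_le.
Qed.

Section TwoTransformations.
Variables P Q : tr X.
Hypotheses (hP : is_mpt mu P) (hQ : is_mpt mu Q).

Lemma coef_dist_le1 i j : coef_dist P Q i j <= 1.
Proof.
have := prob_ge0 mu (timg P (Af i) `&` Af j); have := prob_ge0 mu (timg Q (Af i) `&` Af j).
have := prob_le1 mu (measurableI _ _ (measurable_timg hP (mAf i)) (mAf j)).
have := prob_le1 mu (measurableI _ _ (measurable_timg hQ (mAf i)) (mAf j)).
by rewrite /coef_dist => *; rewrite ler_norml; apply/andP; split; lra.
Qed.

Lemma dist_timg_le1 i : dist_timg P Q i <= 1.
Proof. by apply: prob_le1; measurable_set. Qed.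

Lemma dist_tpre_le1 i : dist_tpre P Q i <= 1.
Proof. by apply: prob_le1; measurable_set. Qed.

Lemma coef_dist_le_dist_timg i j : coef_dist P Q i j <= dist_timg P Q i.
Proof. by apply: dist_probI_le_symdiff; measurable_set. Qed.

Lemma dist_timg_le_approx m j (del : R) :
  prob mu (symdiff (timg P (Af m)) (Af j)) < del ->
  dist_timg P Q m <= 4 * del + 2 * coef_dist P Q m j.
Proof.
move=> approx; apply: prob_symdiff_le_approx approx; try measurable_set.
by rewrite !prob_timg.
Qed.

Lemma dist_tpre_le_approx m j (del : R) :
  prob mu (symdiff (tpre P (Af m)) (Af j)) < del ->
  dist_tpre P Q m <= 4 * del + 2 * coef_dist P Q j m.
Proof.
move=> approx; rewrite /coef_dist -!prob_tpreI //.
by apply: prob_symdiff_le_approx approx; try measurable_set; rewrite !prob_tpre.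
Qed.

Local Open Scope ereal_scope.

Lemma aAkE k : aAk mu Af k P Q = (akR k P Q)%:E.
Proof.
rewrite /aAk /akR -sumEFin; apply: eq_bigr => i _; rewrite -sumEFin.
by apply: eq_bigr => j _; rewrite !probE //; measurable_set.
Qed.

Lemma aAE : aA mu Af P Q =
  \sum_(i <oo) \sum_(j <oo) (wt R i * wt R j * coef_dist P Q i j)%:E.
Proof.
apply: eq_eseriesr => i _; apply: eq_eseriesr => j _.
by rewrite !probE //; measurable_set.
Qed.

Lemma dAE : dA mu Af P Q = \sum_(i <oo) (wt R i * (dist_timg P Q i + dist_tpre P Q i))%:E.
Proof.
by apply: eq_eseriesr => i _; rewrite /dist_timg /dist_tpre !probE //; measurable_set.
Qed.

Lemma dA_term_ge0 i : 0 <= (wt R i * (dist_timg P Q i + dist_tpre P Q i))%:E.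
Proof. by rewrite lee_fin mulr_ge0 ?wt_ge0 ?addr_ge0 ?prob_ge0. Qed.

Lemma dA_ge0 : 0 <= dA mu Af P Q.
Proof. by rewrite dAE; apply: nneseries_ge0 => i _ _; exact: dA_term_ge0. Qed.

Lemma aA_ge0 : 0 <= aA mu Af P Q.
Proof.
rewrite aAE; apply: nneseries_ge0 => i _ _; apply: nneseries_ge0 => j _ _.
by rewrite lee_fin !mulr_ge0 ?wt_ge0 ?normr_ge0.
Qed.

Lemma aAk_le_aA k : aAk mu Af k P Q <= aA mu Af P Q.
Proof.
rewrite /aAk aAE; apply: le_trans (nneseries_lim_ge k _); last first.
  by move=> i _ _; apply: nneseries_ge0 => j _ _; rewrite lee_fin !mulr_ge0 ?wt_ge0 ?normr_ge0.
apply: lee_sum => i _; apply: le_trans (nneseries_lim_ge k _); last first.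
  by move=> j _ _; rewrite lee_fin !mulr_ge0 ?wt_ge0 ?normr_ge0.
rewrite le_eqVlt; apply/orP; left; apply/eqP; apply: eq_bigr => j _.
by rewrite !probE //; measurable_set.
Qed.

Lemma aAk_le_dA k : aAk mu Af k P Q <= dA mu Af P Q.
Proof.
rewrite aAkE dAE; apply: le_trans (nneseries_lim_ge k _); last by move=> i _ _; exact: dA_term_ge0.
rewrite sumEFin lee_fin /akR; apply: ler_sum => i _.
apply: (@le_trans _ _ (\sum_(0 <= j < k) wt R i * wt R j * dist_timg P Q i)%R).
  apply: ler_sum => j _; apply: ler_wpM2l; first by rewrite mulr_ge0 ?wt_ge0.
  exact: coef_dist_le_dist_timg.
rewrite -big_distrl /= -big_distrr /= -mulrA; apply: ler_wpM2l; first exact: wt_ge0.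
have := sum_wt_le1 R k; have := prob_ge0 mu (symdiff (tpre P (Af i)) (tpre Q (Af i))).
have := prob_ge0 mu (symdiff (timg P (Af i)) (timg Q (Af i))).
have := @sumr_ge0 R _ (index_iota 0 k) xpredT (wt R) (fun i _ => wt_ge0 R i).
by rewrite /dist_timg /dist_tpre => *; nra.
Qed.

Lemma dA_term_le i : (wt R i * (dist_timg P Q i + dist_tpre P Q i))%:E <= (wt R i * 2)%:E.
Proof.
rewrite lee_fin ler_wpM2l ?wt_ge0 //.
by have := dist_timg_le1 i; have := dist_tpre_le1 i; lra.
Qed.

Lemma dA_le2 : dA mu Af P Q <= 2%:E.
Proof.
rewrite dAE; apply: le_trans _ (nneseries_wt_le (ler0n R 2)).
by apply: lee_nneseries => [i _ _|i _]; [exact: dA_term_ge0 | exact: dA_term_le].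
Qed.

Lemma dA_le_head (M : nat) (eta : R) : (0 <= eta)%R ->
  (forall m, (m < M)%N -> dist_timg P Q m <= eta /\ dist_tpre P Q m <= eta)%R ->
  dA mu Af P Q <= (2 * eta + 2 * 2%:R ^- M)%:E.
Proof.
move=> eta0 hm; rewrite dAE.
apply: le_trans (nneseries_le_partial_tail (M:=M) (c:=2) _ _ _) _ => //.
- exact: dA_term_ge0.
- by move=> i _; exact: dA_term_le.
rewrite EFinD leeD2r // sumEFin lee_fin.
apply: (@le_trans _ _ (\sum_(0 <= i < M) (wt R i * (2 * eta)))%R).
  rewrite big_nat [X in (_ <= X)%R]big_nat; apply: ler_sum => i /andP[_ iM].
  by rewrite ler_wpM2l ?wt_ge0 //; have [] := hm i iM; lra.
by rewrite -big_distrl /=; have := sum_wt_le1 R M; nra.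
Qed.

Lemma dA_le_approx N k (del : R) : (N <= k)%N -> (0 <= del)%R ->
  (forall m, (m < N)%N ->
     approx_by k del (timg P (Af m)) /\ approx_by k del (tpre P (Af m))) ->
  dA mu Af P Q <=
    (2 * (4 * del + 2 * (2%:R ^+ k * 2%:R ^+ k * akR k P Q)) + 2 * 2%:R ^- N)%:E.
Proof.
move=> Nk del0 approx; apply: dA_le_head.
  by rewrite addr_ge0 ?mulr_ge0 ?exprn_ge0 ?akR_ge0.
move=> m mN; have mk := leq_trans mN Nk.
have [[j jk hj] [j' jk' hj']] := approx m mN.
have := coef_dist_le_akR P Q mk jk; have := coef_dist_le_akR P Q jk' mk.
have := dist_timg_le_approx hj; have := dist_tpre_le_approx hj'.
by move=> *; split; lra.
Qed.

Lemma aA_le_akR k : aA mu Af P Q <= (akR k P Q + 2 * 2%:R ^- k)%:E.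
Proof.
rewrite aAE.
set t := fun i j => (wt R i * wt R j * coef_dist P Q i j)%R.
have t0 i j : (0 <= t i j)%R by rewrite !mulr_ge0 ?wt_ge0 ?normr_ge0.
have t_le i j : (t i j <= wt R j * wt R i)%R.
  rewrite /t [X in (_ <= X)%R]mulrC -[X in (_ <= X)%R]mulr1.
  by rewrite ler_wpM2l ?mulr_ge0 ?wt_ge0 ?coef_dist_le1.
have inner i : \sum_(j <oo) (t i j)%:E <= (\sum_(0 <= j < k) t i j + wt R i * 2%:R ^- k)%:E.
  apply: le_trans (nneseries_le_partial_tail (M:=k) (c:=wt R i) _ _ _) _ => //.
  - by move=> j; rewrite lee_fin t0.
  - by move=> j _; rewrite lee_fin t_le.
  - exact: wt_ge0.
  by rewrite sumEFin EFinD.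
have inner_le1 i : \sum_(j <oo) (t i j)%:E <= (wt R i * 1)%:E.
  rewrite mulr1; apply: le_trans _ (nneseries_wt_le (wt_ge0 R i)).
  by apply: lee_nneseries => [j _ _|j _]; rewrite lee_fin ?t0 ?t_le.
apply: le_trans (nneseries_le_partial_tail (M:=k) (c:=1) _ _ _) _ => //.
- by move=> i; apply: nneseries_ge0 => j _ _; rewrite lee_fin t0.
- by move=> i _; exact: inner_le1.
apply: (@le_trans _ _ ((\sum_(0 <= i < k) (\sum_(0 <= j < k) t i j
   + wt R i * 2%:R ^- k))%:E + (1 * 2%:R ^- k)%:E)).
  by apply: leeD2r; rewrite -sumEFin; apply: lee_sum => i _; exact: inner.
rewrite -EFinD lee_fin big_split /= -big_distrl /=.
by have := sum_wt_le1 R k; have := expr2V_ge0 R k; rewrite /akR /t => *; nra.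
Qed.

End TwoTransformations.
End Distances.

Lemma exists_common_bound (P : nat -> nat -> Prop) N :
  (forall p k k', (k <= k')%N -> P p k -> P p k') ->
  (forall p, (p < N)%N -> exists k, P p k) -> exists k, forall p, (p < N)%N -> P p k.
Proof.
move=> mono; elim: N => [|N IH] h; first by exists 0%N.
have [k1 hk1] := IH (fun p pN => h p (ltnW pN)).
have [k2 hk2] := h N (ltnSn N).
exists (maxn k1 k2) => p; rewrite ltnS leq_eqVlt => /orP[/eqP ->|pN].
  by apply: mono hk2; rewrite leq_maxr.
by apply: mono (hk1 p pN); rewrite leq_maxl.
Qed.

Lemma compact_uniform_index (R : realType) (G : topologicalType) (C : set G)
    (f : nat -> G -> R) (c : nat -> R) :
  compact C -> (forall j, continuous (f j)) -> (forall g, C g -> exists j, c j < f j g) ->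
  exists k, forall g, C g -> exists2 j, (j < k)%N & c j < f j g.
Proof.
move=> cC fc hC.
have cover x : C x -> \forall x' \near x & k \near \oo, exists2 j, (j < k)%N & c j < f j x'.
  move=> Cx; have [j hj] := hC x Cx.
  exists ([set x' | c j < f j x'], [set k | (j < k)%N]) => /=.
    split; last by exists j.+1.
    apply: (fc j x [set y | c j < y]).
    by apply: open_nbhs_nbhs; split => //; exact: open_gt.
  by move=> [x' k] /= [h1 h2]; exists j.
have [k0 _ hk0] := proj1 (compact_near_coveringP C) cC nat \oo
  (fun k g => exists2 j, (j < k)%N & c j < f j g) _ cover.
by exists k0 => g Cg; exact: (hk0 k0 (leqnn k0) g Cg).
Qed.

Section Approximation.
Variables (R : realType) (d : measure_display) (X : measurableType d)
  (mu : probability X R) (Af : nat -> set X)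
  (G : topologicalType) (mulG : G -> G -> G).
Hypothesis mAf : forall i, measurable (Af i).
Hypothesis dense : forall B : set X, measurable B -> forall eps : R, 0 < eps ->
  exists i, (mu (symdiff (Af i) B) < eps%:E)%E.

Lemma uniform_approx_on_compact (B : G -> set X) (C : set G) (b del : R) :
  compact C -> 0 < del -> (forall g, measurable (B g)) -> (forall g, prob mu (B g) = b) ->
  (forall j, continuous (fun g => prob mu (B g `&` Af j))) ->
  exists k, forall g, C g -> approx_by mu Af k del (B g).
Proof.
move=> cC del0 mB hb hc.
have close g j : (prob mu (symdiff (B g) (Af j)) < del) =
    ((b + prob mu (Af j) - del) / 2 < prob mu (B g `&` Af j)).
  by rewrite prob_symdiff // hb; apply/idP/idP => ?; lra.
have cover g : C g -> exists j, (b + prob mu (Af j) - del) / 2 < prob mu (B g `&` Af j).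
  move=> _; have [j hj] := dense (mB g) del0; exists j.
  rewrite -close -lte_fin -probE symdiffC //.
  by apply: measurableU; apply: measurableD.
have [k hk] := compact_uniform_index cC hc cover.
by exists k => g Cg; have [j jk hj] := hk g Cg; exists j; rewrite ?close.
Qed.

Lemma action_uniform_approx (S : G -> tr X) (C : set G) m (del : R) :
  is_action mu mulG S -> compact C -> 0 < del ->
  exists k, forall g, C g ->
    approx_by mu Af k del (timg (S g) (Af m)) /\ approx_by mu Af k del (tpre (S g) (Af m)).
Proof.
move=> [mS _ cont] cC del0.
have [k1 hk1] : exists k, forall g, C g -> approx_by mu Af k del (timg (S g) (Af m)).
  apply: uniform_approx_on_compact (prob mu (Af m)) _ cC del0 _ _ _.
  - by move=> g; exact: (measurable_timg (mS g) (mAf m)).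
  - by move=> g; exact: (prob_timg (mS g) (mAf m)).
  - by move=> j; exact: cont.
have [k2 hk2] : exists k, forall g, C g -> approx_by mu Af k del (tpre (S g) (Af m)).
  apply: uniform_approx_on_compact (prob mu (Af m)) _ cC del0 _ _ _.
  - by move=> g; exact: (measurable_tpre (mS g) (mAf m)).
  - by move=> g; exact: (prob_tpre (mS g) (mAf m)).
  - move=> j; have -> : (fun g => prob mu (tpre (S g) (Af m) `&` Af j)) =
        (fun g => prob mu (timg (S g) (Af j) `&` Af m)).
      by apply/funext => g; rewrite prob_tpreI.
    exact: cont.
exists (maxn k1 k2) => g Cg; split.
  by apply: approx_by_le (hk1 g Cg); rewrite leq_maxl.
by apply: approx_by_le (hk2 g Cg); rewrite leq_maxr.
Qed.

End Approximation.

Section LeashTopology.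
Variables (R : realType) (d : measure_display) (X : measurableType d)
  (mu : probability X R) (Af : nat -> set X)
  (G : topologicalType) (mulG : G -> G -> G)
  (Gam : set G) (K : nat -> set G) (Kn : option nat).
Hypothesis mAf : forall i, measurable (Af i).
Hypothesis Gam0 : Gam !=set0.
Hypothesis hK : forall i, Kin Kn i -> compact (K i) /\ K i !=set0.

Local Notation MG := (MGG mu mulG Gam).
Local Notation mG := (mGG mu Af Gam K Kn).

Lemma MGG_mpt T : MG T -> forall g, is_mpt mu (T g).
Proof. by case=> [[]]. Qed.

Definition sup_dA (S S' : G -> tr X) i := ereal_sup [set dA mu Af (S g) (S' g) | g in K i].
Definition sup_aA (S S' : G -> tr X) := ereal_sup [set aA mu Af (S g) (S' g) | g in Gam].

Local Open Scope ereal_scope.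

Section TwoActions.
Variables S S' : G -> tr X.
Hypotheses (hS : MG S) (hS' : MG S').
Let mS := MGG_mpt hS.
Let mS' := MGG_mpt hS'.

Lemma sup_dA_ge0 i : Kin Kn i -> 0 <= sup_dA S S' i.
Proof.
move=> Ki; have [_ [g Kg]] := hK Ki.
apply: le_trans (ereal_sup_ubound _); last by exists g.
exact: (dA_ge0 mAf (mS g) (mS' g)).
Qed.

Lemma sup_dA_le2 i : sup_dA S S' i <= 2%:E.
Proof. by apply: ge_ereal_sup => _ [g _ <-]; exact: (dA_le2 mAf (mS g) (mS' g)). Qed.

Lemma sup_aA_ge0 : 0 <= sup_aA S S'.
Proof.
have [g Gg] := Gam0.
apply: le_trans (ereal_sup_ubound _); last by exists g.
exact: (aA_ge0 mAf (mS g) (mS' g)).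
Qed.

Lemma dG_term_ge0 i : Kin Kn i -> 0 <= (wt R i)%:E * sup_dA S S' i.
Proof. by move=> Ki; rewrite mule_ge0 ?lee_fin ?wt_ge0 ?sup_dA_ge0. Qed.

Lemma dG_ge0 : 0 <= dG mu Af K Kn S S'.
Proof. by apply: nneseries_ge0 => i _; exact: dG_term_ge0. Qed.

Lemma dG_le_mGG : dG mu Af K Kn S S' <= mG S S'.
Proof. by rewrite /mGG leeDl // sup_aA_ge0. Qed.

Lemma sup_aA_le_mGG : sup_aA S S' <= mG S S'.
Proof. by rewrite /mGG leeDr // dG_ge0. Qed.

Lemma mGG_ge0 : 0 <= mG S S'.
Proof. exact: le_trans dG_ge0 dG_le_mGG. Qed.

Lemma akR_le_mGG n k g : GamKn Gam K Kn n g ->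
  (akR mu Af k (S g) (S' g))%:E <= (2%:R ^+ n)%:E * mG S S'.
Proof.
have m0 := mGG_ge0; case=> [Gg|[i [Ki iN Kig]]].
- have le_m : (akR mu Af k (S g) (S' g))%:E <= mG S S'.
    rewrite -(aAkE mAf (mS g) (mS' g)); apply: le_trans (aAk_le_aA mAf (mS g) (mS' g) k) _.
    by apply: le_trans sup_aA_le_mGG; apply: ereal_sup_ubound; exists g.
  apply: le_trans le_m _.
  by rewrite -[X in X <= _]mul1e lee_wpmul2r // lee_fin exprn_ege1 // ler1n.
- have term : (wt R i)%:E * sup_dA S S' i <= mG S S'.
    apply: le_trans dG_le_mGG.
    exact: (nneseries_cond_ge_term (f := fun i => (wt R i)%:E * sup_dA S S' i) dG_term_ge0 Ki).
  have : (wt R i)%:E * (akR mu Af k (S g) (S' g))%:E <= mG S S'.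
    apply: le_trans term; rewrite lee_wpmul2l ?lee_fin ?wt_ge0 // -(aAkE mAf (mS g) (mS' g)).
    apply: le_trans (aAk_le_dA mAf (mS g) (mS' g) k) _.
    by apply: ereal_sup_ubound; exists g.
  rewrite -lee_pdivlMl ?wt_gt0 // => /le_trans; apply.
  by rewrite lee_wpmul2r // lee_fin wt_inv_le.
Qed.

Lemma dG_le_head N (c : R) : (0 <= c)%R ->
  (forall i, (i < N)%N -> Kin Kn i -> forall g, K i g -> dA mu Af (S g) (S' g) <= c%:E) ->
  dG mu Af K Kn S S' <= (c + 2 * 2%:R ^- N)%:E.
Proof.
move=> c0 hc; rewrite /dG eseries_mkcond.
apply: le_trans (nneseries_le_partial_tail (M:=N) (c:=2) _ _ _) _ => //.
- by move=> i; case: ifP => Ki //; exact: dG_term_ge0.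
- move=> i _; case: ifP => Ki; last by rewrite lee_fin mulr_ge0 ?wt_ge0.
  by rewrite EFinM lee_wpmul2l ?lee_fin ?wt_ge0 ?sup_dA_le2.
rewrite EFinD leeD2r //.
apply: (@le_trans _ _ (\sum_(0 <= i < N) (wt R i * c)%:E)).
  rewrite big_nat [X in _ <= X]big_nat; apply: lee_sum => i /andP[_ iN].
  case: ifP => Ki; last by rewrite lee_fin mulr_ge0 ?wt_ge0.
  rewrite EFinM lee_wpmul2l ?lee_fin ?wt_ge0 //.
  by apply: ge_ereal_sup => _ [g Kg <-]; exact: (hc i iN Ki g Kg).
by rewrite sumEFin lee_fin -big_distrl /= ler_piMl ?sum_wt_le1.
Qed.

End TwoActions.

Lemma sball_open n k (eps : R) T : (0 < eps)%R -> MG T ->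
  m_open mu Af mulG Gam K Kn (sball mu Af mulG Gam K Kn n k eps T).
Proof.
move=> eps0 hT; have mT := MGG_mpt hT; split; first by move=> S [].
move=> S [hS sS]; have mS := MGG_mpt hS.
set s := sNK mu Af Gam K Kn n k T S in sS *.
have s0 : 0 <= s.
  have [g Gg] := Gam0; apply: le_trans (ereal_sup_ubound _); last by exists g; first left.
  by rewrite (aAkE mAf (mT g) (mS g)) lee_fin akR_ge0.
have sfin : s = (fine s)%:E by rewrite fineK // ge0_fin_numE // (lt_trans sS) // ltry.
have fs : (fine s < eps)%R by rewrite -lte_fin -sfin.
exists ((eps - fine s) / 2%:R ^+ n)%R; first by rewrite divr_gt0 ?exprn_gt0 // subr_gt0.
move=> S' hS' hm; split => //; have mS' := MGG_mpt hS'.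
have m0 := mGG_ge0 hS hS'.
have mfin : mG S S' = (fine (mG S S'))%:E.
  by rewrite fineK // ge0_fin_numE // (lt_trans hm) // ltry.
rewrite mfin lte_fin ltr_pdivlMr ?exprn_gt0 // in hm.
apply: (@le_lt_trans _ _ (fine s + 2%:R ^+ n * fine (mG S S'))%R%:E); last first.
  by rewrite lte_fin; lra.
apply: ge_ereal_sup => _ [g hg <-]; rewrite (aAkE mAf (mT g) (mS' g)) lee_fin.
apply: le_trans (akR_triangle mu Af k (T g) (S g) (S' g)) _; apply: lerD.
  by rewrite -lee_fin -sfin -(aAkE mAf (mT g) (mS g)); apply: ereal_sup_ubound; exists g.
by rewrite -lee_fin EFinM -mfin akR_le_mGG.
Qed.


Hypothesis dense : forall B : set X, measurable B -> forall eps : R, (0 < eps)%R ->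
  exists i, mu (symdiff (Af i) B) < eps%:E.

Lemma uniform_approx_on_K S N (del : R) : MG S -> (0 < del)%R ->
  exists k, forall i, (i < N)%N -> forall m, (m < N)%N -> Kin Kn i -> forall g, K i g ->
    approx_by mu Af k del (timg (S g) (Af m)) /\ approx_by mu Af k del (tpre (S g) (Af m)).
Proof.
move=> hS del0.
apply: exists_common_bound => [i k k' kk' h m mN Ki g Kg|i _].
  by have [? ?] := h m mN Ki g Kg; split; exact: approx_by_le kk' _.
apply: exists_common_bound => [m k k' kk' h Ki g Kg|m _].
  by have [? ?] := h Ki g Kg; split; exact: approx_by_le kk' _.
have [Ki|_] := boolP (Kin Kn i); last by exists 0%N.
have [k hk] := action_uniform_approx mAf dense m hS.1 (hK Ki).1 del0.
by exists k => _; exact: hk.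
Qed.

Lemma mGG_le_akR S S' N k (del eps : R) : MG S -> MG S' ->
  (N <= k)%N -> (0 <= del)%R -> (0 <= eps)%R ->
  (forall i, (i < N)%N -> forall m, (m < N)%N -> Kin Kn i -> forall g, K i g ->
    approx_by mu Af k del (timg (S g) (Af m)) /\ approx_by mu Af k del (tpre (S g) (Af m))) ->
  (forall g, GamKn Gam K Kn N g -> (akR mu Af k (S g) (S' g) <= eps)%R) ->
  mG S S' <= (2 * (4 * del + 2 * (2%:R ^+ k * 2%:R ^+ k * eps)) + 2 * 2%:R ^- N
               + 2 * 2%:R ^- N + (eps + 2 * 2%:R ^- k))%:E.
Proof.
move=> hS hS' Nk del0 eps0 approx small.
have mS := MGG_mpt hS; have mS' := MGG_mpt hS'.
have P0 : (0 <= 2%:R ^+ k * 2%:R ^+ k :> R)%R by rewrite mulr_ge0 ?exprn_ge0.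
rewrite /mGG EFinD; apply: leeD.
  apply: dG_le_head => //.
    by have := expr2V_ge0 R N; have := mulr_ge0 P0 eps0; lra.
  move=> i iN Ki g Kg; have gN : GamKn Gam K Kn N g by right; exists i.
  apply: le_trans (dA_le_approx mAf (mS g) (mS' g) Nk del0 _) _.
    by move=> m mN; exact: (approx i iN m mN Ki g Kg).
  by rewrite lee_fin lerD2r ler_wpM2l // lerD2l ler_wpM2l // ler_wpM2l // small.
apply: ge_ereal_sup => _ [g Gg <-]; apply: le_trans (aA_le_akR mAf (mS g) (mS' g) k) _.
by rewrite lee_fin lerD2r small //; left.
Qed.

Lemma sball_sub_mball S (r : R) : MG S -> (0 < r)%R ->
  exists n k (eps : R), [/\ (0 < n)%N, (0 < k)%N, (0 < eps)%R &
      sball mu Af mulG Gam K Kn n k eps S S] /\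
    forall S', sball mu Af mulG Gam K Kn n k eps S S' -> mG S S' < r%:E.
Proof.
move=> hS r0; have mS := MGG_mpt hS.
have [N [N0 hN]] := exists_expr2V_lt (divr_gt0 r0 (ltr0n R 12)).
pose del := (r / 64)%R; have del0 : (0 < del)%R by rewrite divr_gt0.
have [k0 hk0] := uniform_approx_on_K N hS del0.
pose k := maxn k0 N; have Nk : (N <= k)%N by rewrite leq_maxr.
pose P : R := (2%:R ^+ k * 2%:R ^+ k)%R.
have P1 : (1 <= P)%R by rewrite mulr_ege1 // exprn_ege1 // ler1n.
pose eps := (r / (32 * P))%R.
have eps0 : (0 < eps)%R by rewrite divr_gt0 // mulr_gt0 // (lt_le_trans ltr01).
have epsP : (P * eps = r / 32)%R by rewrite /eps; field; rewrite gt_eqF // (lt_le_trans ltr01).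
have eps_le : (eps <= r / 32)%R by rewrite -epsP ler_peMl // ltW.
exists N, k, eps; split.
  split => //; first exact: leq_trans Nk.
  split => //; apply: (@le_lt_trans _ _ 0); last by rewrite lte_fin.
  apply: ge_ereal_sup => _ [g _ <-].
  by rewrite (aAkE mAf (mS g) (mS g)) akR_refl.
move=> S' [hS' sS']; have mS' := MGG_mpt hS'.
have small g : GamKn Gam K Kn N g -> (akR mu Af k (S g) (S' g) <= eps)%R.
  move=> hg; rewrite -lee_fin -(aAkE mAf (mS g) (mS' g)); apply/ltW; apply: le_lt_trans sS'.
  by apply: ereal_sup_ubound; exists g.
apply: le_lt_trans (mGG_le_akR hS hS' Nk (ltW del0) (ltW eps0) _ small) _.
  by move=> i iN m mN Ki g Kg; have [? ?] := hk0 i iN m mN Ki g Kg; split;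
    apply: approx_by_le (leq_maxl _ _) _.
rewrite lte_fin -/P epsP; have := expr2V_le R Nk; rewrite /del; lra.
Qed.

Lemma sball_base U S : m_open mu Af mulG Gam K Kn U -> U S ->
  exists (n k : nat) (eps : R) (T : G -> tr X),
    [/\ (0 < n)%N, (0 < k)%N, (0 < eps)%R, MG T & sball mu Af mulG Gam K Kn n k eps T S] /\
    sball mu Af mulG Gam K Kn n k eps T `<=` U.
Proof.
move=> [UM hU] US; have [r r0 hr] := hU S US.
have [n [k [eps [[n0 k0 eps0 hSS] hsub]]]] := sball_sub_mball (UM S US) r0.
exists n, k, eps, S; split => [|S' hS']; first by split => //; exact: UM.
by apply: hr; [exact: hS'.1 | exact: hsub].
Qed.

End LeashTopology.

Theorem mainTheorem10
  (R : realType) (d : measure_display) (X : measurableType d)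
  (mu : probability X R) (Af : nat -> set X)
  (G : topologicalType) (mulG : G -> G -> G) (invG : G -> G) (oneG : G)
  (Gam : set G) (K : nat -> set G) (Kn : option nat) :
  nonatomic_lebesgue_space mu ->
  (forall i, measurable (Af i)) ->
  (@measurable _ X = <<s range Af >>) ->
  (forall B : set X, measurable B -> forall eps : R, 0 < eps ->
     exists i, (mu (symdiff (Af i) B) < eps%:E)%E) ->
  is_topological_group mulG invG oneG ->
  hausdorff_space G -> locally_compact [set: G] -> first_countable G ->
  (forall i, Kin Kn i -> compact (K i) /\ (exists g, (K i)° g)) ->
  (exists S : set G, S `<=` \bigcup_(i in [set i | Kin Kn i]) K i /\
                     generates mulG invG oneG S) ->
  unbounded Gam ->
  (forall (n k : nat) (eps : R) (T : G -> tr X),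
     (0 < n)%N -> (0 < k)%N -> 0 < eps -> MGG mu mulG Gam T ->
     m_open mu Af mulG Gam K Kn (sball mu Af mulG Gam K Kn n k eps T)) /\
  (forall U : set (G -> tr X), m_open mu Af mulG Gam K Kn U ->
     forall S, U S ->
     exists (n k : nat) (eps : R) (T : G -> tr X),
       [/\ (0 < n)%N, (0 < k)%N, 0 < eps, MGG mu mulG Gam T &
           sball mu Af mulG Gam K Kn n k eps T S] /\
       sball mu Af mulG Gam K Kn n k eps T `<=` U).
Proof.
move=> _ mAf _ dense _ _ _ _ hK _ unb.
have Gam0 : Gam !=set0.
  by apply: contrapT => nG; apply: (unb set0 compact0) => g Gg; apply: nG; exists g.
have hK' i : Kin Kn i -> compact (K i) /\ K i !=set0.
  by move=> /hK[cK [g Kg]]; split => //; exists g; exact: interior_subset.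
split.
- by move=> n k eps T _ _ eps0 hT; exact: sball_open.
- by move=> U hU S US; exact: sball_base.
Qed.
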